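(* Let $\mathcal{X}$ be an SP such that either $0$ is an absorbing state for $\mathcal{X}$ or there exists a supermartingale deflator $Y$ for $\mathcal{X}$ with $\{Y=0\}\subseteq\{X=0\}$ for all $X\in\mathcal{X}$, and let $\widetilde{T}$ be the $P$-a.s. unique stopping time such that $X=XI_{\llbracket 0,\widetilde{T}\llbracket}$ $P$-a.s. for all $X\in\mathcal{X}$ and such that there is a sequence $(\hat X^n)_{n\in\mathbb N}\subseteq\mathcal X$ with $\hat{T}^n:=\inf\{t\ge0:\hat{X}^n_t=0\}\nearrow\widetilde{T}$. Let $\tilde{\tau}:\Omega\to(0,\infty]$ be a random time such that for all $0\le s<t\le\infty$ with $P[\tilde{\tau}\in(s,t]]>0$, writing $Q^{(s,t)}:=P[\,\cdot\,|\,\tilde{\tau}\in(s,t]]$, there exists $\hat{X}^{(s,t)}\in\mathcal{X}$ which is strictly positive on $[0,s]$ $Q^{(s,t)}$-a.s., and every $X\in\mathcal{X}$ is zero on $[t,\infty)$ $Q^{(s,t)}$-a.s. Then $\tilde{\tau}=\widetilde{T}$ $P$-a.s.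
   Context: Work on a filtered probability space $(\Omega,\mathcal{F},\mathbb{F},P)$, $\mathbb{F}=(\mathcal{F}_t)_{t\ge0}$ satisfying the usual conditions, $\mathcal{F}_0$ trivial; convention $0/0=1$. $\llbracket 0,\tau\llbracket=\{(\omega,t)\in\Omega\times[0,\infty):0\le t<\tau(\omega)\}$; the interval $(s,\infty]$ includes $\infty$. A set of processes (SP) is a set $\mathcal{X}$ of processes such that: (A) each $X\in\mathcal{X}$ is an adapted, nonnegative, $P$-a.s. right-continuous process on $[0,\infty)$ with $X_0=1$; (C) for $X,X'\in\mathcal{X}$ and $\alpha\in[0,1]$, $(1-\alpha)X+\alpha X'\in\mathcal{X}$; (D) for all $t\in[0,\infty)$, $A\in\mathcal{F}_t$, $X\in\mathcal{X}$ and $X'\in\mathcal{X}$ with $\{X'_t=0\}\subseteq\{X_t=0\}$ on $A$, the process $I_{A^c}X_\cdot + I_A (X_{t\wedge\cdot}/X'_t)X'_{t\vee\cdot}$ belongs to $\mathcal{X}$. $0$ is an absorbing state if $\{X_s=0\}\subseteq\{X_t=0\}$ for every $X\in\mathcal{X}$ and $0\le s<t<\infty$. A supermartingale deflator for $\mathcal{X}$ is a process $Y$ with $XY$ a supermartingale for every $X\in\mathcal{X}$. *)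

From HB Require Import structures.
From mathcomp Require Import all_boot all_order all_algebra.
From mathcomp Require Import all_classical all_reals all_analysis.
From mathcomp Require Import measurable_realfun.
Set Implicit Arguments. Unset Strict Implicit. Unset Printing Implicit Defensive.
Import Order.TTheory GRing.Theory Num.Theory.
Import numFieldNormedType.Exports.
Local Open Scope classical_set_scope.
Local Open Scope ring_scope.

(* Time is [0, oo), encoded as real numbers t with 0 <= t; values of processes
   at negative times are irrelevant junk.  A process is a map time -> Omega -> R. *)
Definition process (T : Type) (R : realType) := R -> T -> R.

Section Defs.
Context {d : measure_display} {T : measurableType d} {R : realType}.
Variable P : probability T R.
Variable F : R -> set (set T).

Definition Gmeas (G : set (set T)) (f : T -> R) :=
  forall B : set R, measurable B -> G (f @^-1` B).

Definition usual_filtration :=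
  (forall t, 0 <= t -> sigma_algebra setT (F t) /\ F t `<=` measurable) /\
  (forall s t, 0 <= s -> s <= t -> F s `<=` F t) /\
  (forall N : set T, (exists M, measurable M /\ N `<=` M /\ P M = 0%E) -> F 0 N) /\
  (forall t (A : set T), 0 <= t -> (forall u, t < u -> F u A) -> F t A) /\
  (forall A, F 0 A -> P A = 0%E \/ P A = 1%E).

Definition adapted (X : process T R) := forall t, 0 <= t -> Gmeas (F t) (X t).

Definition stopping_time (tau : T -> \bar R) :=
  (forall w, (0 <= tau w)%E) /\
  forall t, 0 <= t -> F t [set w | (tau w <= t%:E)%E].

(* supermartingale w.r.t. (F, P), conditional expectations unfolded:
   E[Z_t 1_A] <= E[Z_s 1_A] for s <= t and A in F_s *)
Definition supermartingale (Z : process T R) :=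
  adapted Z /\
  (forall t, 0 <= t -> P.-integrable setT (fun w => (Z t w)%:E)) /\
  (forall s t (A : set T), 0 <= s -> s <= t -> F s A ->
     (\int[P]_(w in A) (Z t w)%:E <= \int[P]_(w in A) (Z s w)%:E)%E).

Definition ratio (a b : R) : R := if (a == 0) && (b == 0) then 1 else a / b.

(* I_{A^c} X + I_A (X_{t /\ .} / X'_t) X'_{t \/ .}, read as the pasting:
   X up to time t, then (X_t/X'_t) X' afterwards, on A *)
Definition concat (t : R) (A : set T) (X X' : process T R) : process T R :=
  fun u w => if `[< A w >] then
               (if u <= t then X u w else ratio (X t w) (X' t w) * X' u w)
             else X u w.

Definition is_SP (XX : set (process T R)) :=
  (forall X, XX X ->
     adapted X /\ (forall t w, 0 <= t -> 0 <= X t w) /\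
     {ae P, forall w, forall t, 0 <= t -> X^~ w u @[u --> t^'+] --> X t w} /\
     (forall w, X 0 w = 1)) /\
  (forall X X' (a : R), XX X -> XX X' -> 0 <= a <= 1 ->
     XX (fun u w => (1 - a) * X u w + a * X' u w)) /\
  (forall t A X X', 0 <= t -> F t A -> XX X -> XX X' ->
     (forall w, A w -> X' t w = 0 -> X t w = 0) ->
     XX (concat t A X X')).

Definition zero_absorbing (XX : set (process T R)) :=
  forall X, XX X -> forall s t w, 0 <= s -> s < t -> X s w = 0 -> X t w = 0.

Definition supermartingale_deflator (XX : set (process T R)) (Y : process T R) :=
  forall X, XX X -> supermartingale (fun t w => X t w * Y t w).

(* first hitting time of zero, inf of the empty set = +oo *)
Definition hit0 (X : process T R) (w : T) : \bar R :=
  ereal_inf [set t%:E | t in [set t | 0 <= t /\ X t w = 0]].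

Definition condP (E A : set T) : R := fine (P (A `&` E)) / fine (P E).

Definition cond_as (E : set T) (prop : T -> Prop) :=
  exists N, measurable N /\ [set w | ~ prop w] `<=` N /\ condP E N = 0.

End Defs.

From HB Require Import structures.
From mathcomp Require Import all_boot all_order all_algebra.
From mathcomp Require Import all_classical all_reals all_analysis.
From mathcomp Require Import measurable_realfun.
Set Implicit Arguments. Unset Strict Implicit. Unset Printing Implicit Defensive.
Import Order.TTheory GRing.Theory Num.Theory.
Import numFieldNormedType.Exports.
Local Open Scope classical_set_scope.
Local Open Scope ring_scope.

(* It suffices to compare the events {tau <= q} and {Ttil <= q} for rational q,
   since these are countably many and separate points of [0, +oo].  If tau <= q,
   conditioning on {0 < tau <= q} shows that every X in XX vanishes from time q on,
   so each hitting time of zero of Xh n is at most q and hence so is their limit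
   Ttil.  If q < tau, conditioning on {q < tau} yields an X in XX that is positive
   at time q; since X vanishes from Ttil on, q < Ttil. *)

Lemma ereal_rat_between (R : realType) (a b : \bar R) : (0 <= a)%E -> (a < b)%E ->
  exists q : rat, (a <= (ratr q)%:E < b)%E.
Proof.
case: a => [r| |] //= _; case: b => [r'| |] //= rr'.
- have [q] := rat_in_itvoo rr'; rewrite in_itv /= => /andP[rq qr'].
  by exists q; rewrite lee_fin lte_fin (ltW rq) qr'.
- have [q] : exists q : rat, ratr q \in `]r, r + 1[ by apply: rat_in_itvoo; rewrite ltrDl.
  rewrite in_itv /= => /andP[rq _]; by exists q; rewrite lee_fin (ltW rq) ltry.
Qed.

Lemma ereal_le_rat (R : realType) (a b : \bar R) : (0 <= a)%E ->
  (forall q : rat, (a <= (ratr q)%:E)%E -> (b <= (ratr q)%:E)%E) -> (b <= a)%E.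
Proof.
move=> a_ge0 ab; rewrite leNgt; apply/negP => /(ereal_rat_between a_ge0)[q].
by move=> /andP[/ab bq]; rewrite ltNge bq.
Qed.

Lemma ae_forall_countable d (T : measurableType d) (R : realType)
    (mu : {measure set T -> \bar R}) (I : countType) (Q : I -> T -> Prop) :
  (forall i, \forall x \ae mu, Q i x) -> \forall x \ae mu, forall i, Q i x.
Proof.
move=> Qae; have : \forall x \ae mu, forall n,
    if unpickle n is Some i then Q i x else True.
  by apply: ae_foralln => n; case: unpickle => [i|]; [exact: Qae|exact: nearW].
by apply: filterS => x Qx i; have := Qx (pickle i); rewrite pickleK.
Qed.

Lemma ae_on_of_cond_as d (T : measurableType d) (R : realType)
    (P : probability T R) (E : set T) (Q : T -> Prop) :
  measurable E -> ((0 < P E)%E -> cond_as P E Q) -> \forall w \ae P, E w -> Q w.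
Proof.
move=> mE condQ; have [PE_gt0|PE_le0] := ltP 0%E (P E); last first.
  apply: (negligibleS _ (proj2 (negligibleP _ mE) _)).
    by move=> w /= /not_implyP[].
  by apply/eqP; rewrite -measure_le0.
have [N [mN [NQ condN0]]] := condQ PE_gt0.
exists (N `&` E); split; [exact: measurableI| |by move=> w /= /not_implyP[Ew /NQ]].
have PE_neq0 : fine (P E) != 0 by rewrite gt_eqF // -lte_fin fineK // fin_num_measure.
move/eqP: condN0; rewrite /condP mulf_eq0 invr_eq0 (negbTE PE_neq0) orbF => /eqP NE0.
by rewrite -[LHS]fineK ?NE0 // fin_num_measure //; exact: measurableI.
Qed.

Lemma measurable_preimage_itv_oc d (T : measurableType d) (R : realType)
    (f : T -> \bar R) (s : R) (t : \bar R) :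
  measurable_fun [set: T] f -> measurable [set w | (s%:E < f w)%E /\ (f w <= t)%E].
Proof.
move=> mf; have := mf measurableT _ (emeasurable_itv `]s%:E, t]); rewrite setTI.
by congr measurable; apply/seteqP; split => w /=; rewrite in_itv /= => /andP.
Qed.

Lemma hit0_le d (T : measurableType d) (R : realType) (X : process T R) w (t : R) :
  0 <= t -> X t w = 0 -> (hit0 X w <= t%:E)%E.
Proof. by move=> t_ge0 Xt0; apply: ereal_inf_lbound; exists t. Qed.

Section tau_is_Ttil.
Context d (T : measurableType d) (R : realType) (P : probability T R).
Variables (XX : set (process T R)) (Ttil tau : T -> \bar R).
Hypothesis Ttil_ge0 : forall w, (0 <= Ttil w)%E.
Hypothesis XX_vanish_from_Ttil : forall X, XX X ->
  {ae P, forall w, forall t, 0 <= t ->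
     X t w = X t w * (if (t%:E < Ttil w)%E then 1 else 0)}.
Hypothesis tau_meas : measurable_fun [set: T] tau.
Hypothesis tau_gt0 : forall w, (0 < tau w)%E.
Hypothesis tau_cond : forall (s : R) (t : \bar R), 0 <= s -> (s%:E < t)%E ->
  let E := [set w | (s%:E < tau w)%E /\ (tau w <= t)%E] in
  (0 < P E)%E ->
  (exists Xh, XX Xh /\ cond_as P E (fun w => forall u, 0 <= u <= s -> 0 < Xh u w)) /\
  (forall X, XX X -> cond_as P E (fun w => forall u : R, (t <= u%:E)%E -> X u w = 0)).

Lemma ae_vanish_after_tau X (q : R) : XX X ->
  \forall w \ae P, (tau w <= q%:E)%E -> X q w = 0.
Proof.
move=> XX_X; have [q_gt0|q_le0] := ltP 0 q; last first.
  by apply: aeW => w /(lt_le_trans (tau_gt0 w)); rewrite lte_fin ltNge q_le0.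
have q_gt0E : (0%:E < q%:E)%E by rewrite lte_fin.
have := ae_on_of_cond_as (measurable_preimage_itv_oc 0 q%:E tau_meas)
  (fun PE_gt0 => (tau_cond (lexx 0) q_gt0E PE_gt0).2 _ XX_X).
by apply: filterS => w vanish tau_le; apply: vanish => //; split.
Qed.

Lemma ae_Ttil_le_of_tau_le (Xh : nat -> process T R) (q : R) :
  (forall n, XX (Xh n)) ->
  {ae P, forall w, (fun n => hit0 (Xh n) w) @ \oo --> Ttil w} ->
  \forall w \ae P, (tau w <= q%:E)%E -> (Ttil w <= q%:E)%E.
Proof.
move=> XX_Xh Xh_cvg.
have Xh_vanish := ae_foralln (fun n => ae_vanish_after_tau q (XX_Xh n)).
apply: filterS2 Xh_vanish Xh_cvg => w Xh_vanish Xh_cvg tau_le.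
apply: (cvge_to_le Xh_cvg); apply: nearW => n; apply: hit0_le (Xh_vanish n tau_le).
by rewrite -lee_fin (le_trans (ltW (tau_gt0 w)) tau_le).
Qed.

Lemma ae_tau_le_of_Ttil_le (q : R) :
  \forall w \ae P, (Ttil w <= q%:E)%E -> (tau w <= q%:E)%E.
Proof.
have [q_ge0|q_lt0] := leP 0 q; last first.
  by apply: aeW => w /(le_trans (Ttil_ge0 w)); rewrite lee_fin leNgt q_lt0.
have mE := measurable_preimage_itv_oc q +oo%E tau_meas.
have [PE_gt0|PE_le0] := ltP 0%E (P [set w | (q%:E < tau w)%E /\ (tau w <= +oo)%E]).
- have [[X [XX_X X_pos]] _] := tau_cond q_ge0 (ltry q) PE_gt0.
  apply: filterS2 (ae_on_of_cond_as mE (fun=> X_pos)) (XX_vanish_from_Ttil XX_X).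
  move=> w X_pos_w X_vanish Ttil_le; rewrite leNgt; apply/negP => q_lt_tau.
  have := X_pos_w (conj q_lt_tau (leey _)) q; rewrite q_ge0 lexx => /(_ isT).
  by rewrite X_vanish // ifF ?mulr0 ?ltxx // ltNge Ttil_le.
- apply: filterS (ae_on_of_cond_as (Q := fun=> False) mE _) => [w notE _|PE_gt0].
    by rewrite leNgt; apply/negP => q_lt_tau; apply: notE; split; rewrite ?leey.
  by move: PE_le0; rewrite leNgt PE_gt0.
Qed.

End tau_is_Ttil.

Theorem propositionA9 (d : measure_display) (T : measurableType d) (R : realType)
  (P : probability T R) (F : R -> set (set T))
  (XX : set (process T R)) (Ttil : T -> \bar R) (tau : T -> \bar R) :
  usual_filtration P F ->
  is_SP P F XX ->
  (zero_absorbing XX \/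
   exists Y : process T R, supermartingale_deflator P F XX Y /\
     forall X, XX X -> forall t w, 0 <= t -> Y t w = 0 -> X t w = 0) ->
  stopping_time F Ttil ->
  (forall X, XX X ->
     {ae P, forall w, forall t, 0 <= t -> X t w = X t w * (if (t%:E < Ttil w)%E then 1 else 0)}) ->
  (exists Xh : nat -> process T R, (forall n, XX (Xh n)) /\
     {ae P, forall w, {homo (fun n => hit0 (Xh n) w) : n m / (n <= m)%N >-> (n <= m)%E} /\
        (fun n => hit0 (Xh n) w) @ \oo --> Ttil w}) ->
  measurable_fun [set: T] tau ->
  (forall w, (0 < tau w)%E) ->
  (forall (s : R) (t : \bar R), 0 <= s -> (s%:E < t)%E ->
     let E := [set w | (s%:E < tau w)%E /\ (tau w <= t)%E] in
     (0 < P E)%E ->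
     (exists Xh, XX Xh /\ cond_as P E (fun w => forall u, 0 <= u <= s -> 0 < Xh u w)) /\
     (forall X, XX X -> cond_as P E (fun w => forall u : R, (t <= u%:E)%E -> X u w = 0))) ->
  {ae P, forall w, tau w = Ttil w}.
Proof.
(* The SP axioms, the alternative on 0 and the usual conditions only make Ttil
   well defined; identifying it with tau does not use them. *)
move=> _ _ _ [Ttil_ge0 _] XX_vanish [Xh [XX_Xh Xh_cvg]] tau_meas tau_gt0 tau_cond.
have {}Xh_cvg : {ae P, forall w, (fun n => hit0 (Xh n) w) @ \oo --> Ttil w}.
  by apply: filterS Xh_cvg => w [].
have Ttil_le := ae_forall_countable (fun q : rat =>
  ae_Ttil_le_of_tau_le tau_meas tau_gt0 tau_cond (ratr q) XX_Xh Xh_cvg).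
have tau_le := ae_forall_countable (fun q : rat =>
  ae_tau_le_of_Ttil_le Ttil_ge0 XX_vanish tau_meas tau_cond (ratr q)).
apply: filterS2 Ttil_le tau_le => w Ttil_le tau_le.
apply/le_anti/andP; split; apply: ereal_le_rat => //; exact: ltW.
Qed.
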